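(* Let $\mathcal C$ be a monoidal category satisfying properties (1* ), (4* ), (5), (5* ), (5a* ), (6* ) and (9* ) below. Then for all objects $A,B$ of $\mathcal C$, every object of $\mathbf{TensMor}(A,B)^{\mathrm{op}}$ has an absolute value. In particular, every morphism $\psi\colon P\otimes A\to B$ in $\mathcal C$ has a cosupport.
   Context: $\mathbf{TensMor}(A,B)$: objects are morphisms $\psi\colon P\otimes A\to B$ ($P$ arbitrary), morphisms from $\psi_1\colon P_1\otimes A\to B$ to $\psi_2\colon P_2\otimes A\to B$ are $\tau\colon P_1\to P_2$ with $\psi_2(\tau\otimes\mathrm{id}_A)=\psi_1$. $\psi\colon P\otimes A\to B$ is a tensor monomorphism if for all $f,g\colon R\to P$, $\psi(f\otimes\mathrm{id}_A)=\psi(g\otimes\mathrm{id}_A)$ implies $f=g$ (i.e. $\psi$ is locally initial in $\mathbf{TensMor}(A,B)^{\mathrm{op}}$). The absolute value of $\psi$ (in $\mathbf{TensMor}(A,B)^{\mathrm{op}}$) is a tensor monomorphism $|\psi|\colon\tilde P\otimes A\to B$ with a morphism $\tau\colon P\to\tilde P$ satisfying $|\psi|(\tau\otimes\mathrm{id}_A)=\psi$, such that for every tensor monomorphism $\psi_1\colon P_1\otimes A\to B$ admitting $\sigma\colon P\to P_1$ with $\psi_1(\sigma\otimes\mathrm{id}_A)=\psi$ there exists $\kappa\colon\tilde P\to P_1$ with $\psi_1(\kappa\otimes\mathrm{id}_A)=|\psi|$; $\operatorname{cosupp}\psi:=\tilde P$ is the cosupport. Properties: (1* ) all small colimits; (4*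 ) cowellpowered; (5) $f$ mono implies $f\otimes\mathrm{id}_M$, $\mathrm{id}_M\otimes f$ mono; (5* ) $f$ epi implies $f\otimes\mathrm{id}_M$, $\mathrm{id}_M\otimes f$ epi; (5a* ) $f$ extremal epi implies $f\otimes f$ extremal epi (an epi $\pi$ is extremal if every factorization $\pi=if$ with $i$ mono has $i$ iso); (6* ) for every object $M$, $(-)\otimes M$ preserves colimits of families of extremal quotient objects of a fixed object; (9* ) for every object $M$, $(-)\otimes M$ preserves coequalizers. *)

Set Implicit Arguments.
Unset Strict Implicit.

Record Category := {
  Ob :> Type;
  Hom : Ob -> Ob -> Type;
  idm : forall A : Ob, Hom A A;
  comp : forall A B C : Ob, Hom B C -> Hom A B -> Hom A C;
  comp_id_l : forall A B (f : Hom A B), comp (idm B) f = f;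
  comp_id_r : forall A B (f : Hom A B), comp f (idm A) = f;
  comp_assoc : forall A B C D (f : Hom A B) (g : Hom B C) (h : Hom C D),
      comp h (comp g f) = comp (comp h g) f
}.
Arguments Hom {c} _ _.
Arguments idm {c} _.
Arguments comp {c A B C} _ _.
Notation "g \o f" := (comp g f) (at level 40, left associativity).

Section CatDefs.
Context {C : Category}.

Definition is_mono {A B : C} (f : Hom A B) : Prop :=
  forall (X : C) (g h : Hom X A), f \o g = f \o h -> g = h.

Definition is_epi {A B : C} (f : Hom A B) : Prop :=
  forall (X : C) (g h : Hom B X), g \o f = h \o f -> g = h.

Definition is_iso {A B : C} (f : Hom A B) : Prop :=
  exists g : Hom B A, g \o f = idm A /\ f \o g = idm B.

Definition is_extremal_epi {A B : C} (p : Hom A B) : Prop :=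
  is_epi p /\
  forall (D : C) (f : Hom A D) (i : Hom D B), is_mono i -> p = i \o f -> is_iso i.

End CatDefs.

(** * Smallness: a fixed universe of "small" types *)
Definition SmallType : Type := Type.

Record IndexCat := {
  I_ob : SmallType;
  I_hom : I_ob -> I_ob -> SmallType;
  I_id : forall j, I_hom j j;
  I_comp : forall i j k, I_hom j k -> I_hom i j -> I_hom i k;
  I_comp_id_l : forall i j (u : I_hom i j), I_comp (I_id j) u = u;
  I_comp_id_r : forall i j (u : I_hom i j), I_comp u (I_id i) = u;
  I_comp_assoc : forall i j k l (u : I_hom i j) (v : I_hom j k) (w : I_hom k l),
      I_comp w (I_comp v u) = I_comp (I_comp w v) u
}.

Record Diagram (J : IndexCat) (C : Category) := {
  D_ob : I_ob J -> Ob C;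
  D_hom : forall j k, I_hom j k -> Hom (D_ob j) (D_ob k);
  D_id : forall j, D_hom (I_id j) = idm (D_ob j);
  D_comp : forall i j k (u : I_hom i j) (v : I_hom j k),
      D_hom (I_comp v u) = D_hom v \o D_hom u
}.
Arguments D_ob {J C} _ _.
Arguments D_hom {J C} _ {j k} _.

Definition is_cocone {J : IndexCat} {C : Category} (D : Diagram J C)
  (X : C) (c : forall j, Hom (D_ob D j) X) : Prop :=
  forall j k (u : I_hom j k), c k \o D_hom D u = c j.
Arguments is_cocone {J C} D {X} c.

Definition is_colimit {J : IndexCat} {C : Category} (D : Diagram J C)
  (X : C) (c : forall j, Hom (D_ob D j) X) : Prop :=
  is_cocone D c /\
  forall (Y : C) (d : forall j, Hom (D_ob D j) Y), is_cocone D d ->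
    exists h : Hom X Y, (forall j, h \o c j = d j) /\
      forall h' : Hom X Y, (forall j, h' \o c j = d j) -> h' = h.
Arguments is_colimit {J C} D {X} c.

Definition has_small_colimits (C : Category) : Prop :=
  forall (J : IndexCat) (D : Diagram J C),
    exists (X : C) (c : forall j, Hom (D_ob D j) X), is_colimit D c.

(** [4*] cowellpowered: the quotient objects (epis out of X, up to
    isomorphism under X) of every object form a (small) set *)
Definition cowellpowered (C : Category) : Prop :=
  forall X : C, exists (I : SmallType) (Q : I -> Ob C) (e : forall i, Hom X (Q i)),
    (forall i, is_epi (e i)) /\
    forall (Y : C) (f : Hom X Y), is_epi f ->
      exists (i : I) (phi : Hom (Q i) Y), is_iso phi /\ phi \o e i = f.

Definition is_wide_pushout {C : Category} {X : C} {I : SmallType}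
  {Q : I -> Ob C} (e : forall i, Hom X (Q i))
  (Z : C) (z : Hom X Z) (q : forall i, Hom (Q i) Z) : Prop :=
  (forall i, q i \o e i = z) /\
  forall (Y : C) (y : Hom X Y) (r : forall i, Hom (Q i) Y),
    (forall i, r i \o e i = y) ->
    exists h : Hom Z Y, (h \o z = y /\ forall i, h \o q i = r i) /\
      forall h' : Hom Z Y, (h' \o z = y /\ forall i, h' \o q i = r i) -> h' = h.

Definition is_coequalizer {C : Category} {A B : C} (f g : Hom A B)
  (Q : C) (q : Hom B Q) : Prop :=
  q \o f = q \o g /\
  forall (Y : C) (y : Hom B Y), y \o f = y \o g ->
    exists h : Hom Q Y, h \o q = y /\ forall h' : Hom Q Y, h' \o q = y -> h' = h.

Record MonoidalCategory := {
  mcat :> Category;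
  tens : mcat -> mcat -> mcat;
  tensh : forall (A A' B B' : mcat), Hom A A' -> Hom B B' -> Hom (tens A B) (tens A' B');
  tens_id : forall A B : mcat, tensh (idm A) (idm B) = idm (tens A B);
  tens_comp : forall (A A' A'' B B' B'' : mcat) (f : Hom A A') (f' : Hom A' A'')
      (g : Hom B B') (g' : Hom B' B''),
      tensh (f' \o f) (g' \o g) = tensh f' g' \o tensh f g;
  munit : mcat;
  assoc : forall A B D : mcat, Hom (tens (tens A B) D) (tens A (tens B D));
  assoc_inv : forall A B D : mcat, Hom (tens A (tens B D)) (tens (tens A B) D);
  assoc_iso1 : forall A B D : mcat, assoc_inv A B D \o assoc A B D = idm _;
  assoc_iso2 : forall A B D : mcat, assoc A B D \o assoc_inv A B D = idm _;
  assoc_nat : forall (A A' B B' D D' : mcat) (f : Hom A A') (g : Hom B B') (h : Hom D D'),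
      assoc A' B' D' \o tensh (tensh f g) h = tensh f (tensh g h) \o assoc A B D;
  lunit : forall A : mcat, Hom (tens munit A) A;
  lunit_inv : forall A : mcat, Hom A (tens munit A);
  lunit_iso1 : forall A : mcat, lunit_inv A \o lunit A = idm _;
  lunit_iso2 : forall A : mcat, lunit A \o lunit_inv A = idm _;
  lunit_nat : forall (A A' : mcat) (f : Hom A A'),
      lunit A' \o tensh (idm munit) f = f \o lunit A;
  runit : forall A : mcat, Hom (tens A munit) A;
  runit_inv : forall A : mcat, Hom A (tens A munit);
  runit_iso1 : forall A : mcat, runit_inv A \o runit A = idm _;
  runit_iso2 : forall A : mcat, runit A \o runit_inv A = idm _;
  runit_nat : forall (A A' : mcat) (f : Hom A A'),
      runit A' \o tensh f (idm munit) = f \o runit A;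
  pentagon : forall A B D E : mcat,
      assoc A B (tens D E) \o assoc (tens A B) D E =
      tensh (idm A) (assoc B D E) \o assoc A (tens B D) E \o tensh (assoc A B D) (idm E);
  triangle : forall A B : mcat,
      tensh (idm A) (lunit B) \o assoc A munit B = tensh (runit A) (idm B)
}.
Arguments tens {m} _ _.
Arguments tensh {m A A' B B'} _ _.
Notation "A <x> B" := (tens A B) (at level 35).
Notation "f <*> g" := (tensh f g) (at level 35).

Section MonDefs.
Context {C : MonoidalCategory}.

Definition tens_preserves_mono : Prop :=
  forall (A B M : C) (f : Hom A B), is_mono f ->
    is_mono (f <*> idm M) /\ is_mono (idm M <*> f).

Definition tens_preserves_epi : Prop :=
  forall (A B M : C) (f : Hom A B), is_epi f ->
    is_epi (f <*> idm M) /\ is_epi (idm M <*> f).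

Definition tens_square_extremal_epi : Prop :=
  forall (A B : C) (f : Hom A B), is_extremal_epi f -> is_extremal_epi (f <*> f).

Definition tens_preserves_extremal_quotient_colimits : Prop :=
  forall (M X : C) (I : SmallType) (Q : I -> Ob C) (e : forall i, Hom X (Q i)),
    (forall i, is_extremal_epi (e i)) ->
    forall (Z : C) (z : Hom X Z) (q : forall i, Hom (Q i) Z),
      is_wide_pushout e z q ->
      is_wide_pushout (fun i => e i <*> idm M) (z <*> idm M) (fun i => q i <*> idm M).

Definition tens_preserves_coequalizers : Prop :=
  forall (M A B : C) (f g : Hom A B) (Q : C) (q : Hom B Q),
    is_coequalizer f g q -> is_coequalizer (f <*> idm M) (g <*> idm M) (q <*> idm M).

Definition tensor_mono {P A B : C} (psi : Hom (P <x> A) B) : Prop :=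
  forall (R : C) (f g : Hom R P), psi \o (f <*> idm A) = psi \o (g <*> idm A) -> f = g.

Definition is_absolute_value {P A B : C} (psi : Hom (P <x> A) B)
  (Pt : C) (abs : Hom (Pt <x> A) B) (tau : Hom P Pt) : Prop :=
  tensor_mono abs /\ abs \o (tau <*> idm A) = psi /\
  forall (P1 : C) (psi1 : Hom (P1 <x> A) B), tensor_mono psi1 ->
    (exists sigma : Hom P P1, psi1 \o (sigma <*> idm A) = psi) ->
    exists kappa : Hom Pt P1, psi1 \o (kappa <*> idm A) = abs.

Definition has_absolute_value {P A B : C} (psi : Hom (P <x> A) B) : Prop :=
  exists (Pt : C) (abs : Hom (Pt <x> A) B) (tau : Hom P Pt),
    is_absolute_value psi abs tau.

End MonDefs.
Arguments tens_preserves_mono : clear implicits.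
Arguments tens_preserves_epi : clear implicits.
Arguments tens_square_extremal_epi : clear implicits.
Arguments tens_preserves_extremal_quotient_colimits : clear implicits.
Arguments tens_preserves_coequalizers : clear implicits.

From Stdlib Require Import ProofIrrelevance ClassicalEpsilon ChoiceFacts.

(* Call a strong epimorphism e : P -> Q admissible if psi factors through
   e <*> id_A and every factorization of psi through a tensor monomorphism
   factors through e.  By [4*] the admissible quotients form a set up to
   isomorphism, so their wide pushout z : P -> Z exists by [1*]; by [6*] the
   factorizations of psi glue to h : Z <x> A -> B, and z is again admissible,
   hence the largest admissible quotient.  Then h is a tensor monomorphism:
   if h (f <*> id) = h (g <*> id), the coequalizer c of f and g is preserved
   by - <x> A [9*], so c \o z is admissible, and maximality of z makes c a
   split monomorphism, forcing f = g.  The universal property of h follows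
   from admissibility of z, as z <*> id_A is epi [5*].  Strong epimorphisms,
   being closed under composition, replace the extremal ones. *)

Lemma dependent_functional_choice : DependentFunctionalChoice.
Proof. exact (non_dep_dep_functional_choice choice). Qed.

Definition thin_index_cat {T : SmallType} (R : T -> T -> Prop)
  (R_refl : forall a, R a a) (R_trans : forall a b c, R b c -> R a b -> R a c) :
  IndexCat :=
  {| I_ob := T; I_hom := R; I_id := R_refl; I_comp := R_trans;
     I_comp_id_l := fun _ _ _ => proof_irrelevance _ _ _;
     I_comp_id_r := fun _ _ _ => proof_irrelevance _ _ _;
     I_comp_assoc := fun _ _ _ _ _ _ _ => proof_irrelevance _ _ _ |}.

Section WideSpan.
Context {C : Category} {I : SmallType} {X : C} (Q : I -> Ob C)
  (e : forall i, Hom X (Q i)).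

Definition wide_span_rel (a b : option I) : Prop :=
  match a, b with
  | None, _ => True
  | Some _, None => False
  | Some i, Some j => i = j
  end.

Lemma wide_span_rel_refl (a : option I) : wide_span_rel a a.
Proof. destruct a; simpl; auto. Qed.

Lemma wide_span_rel_trans (a b c : option I) :
  wide_span_rel b c -> wide_span_rel a b -> wide_span_rel a c.
Proof. destruct a, b, c; simpl; intros; subst; auto; contradiction. Qed.

Definition wide_span_cat : IndexCat :=
  thin_index_cat wide_span_rel wide_span_rel_refl wide_span_rel_trans.

Definition wide_span_ob (a : option I) : C :=
  match a with None => X | Some i => Q i end.

Definition wide_span_hom (a b : option I) :
  wide_span_rel a b -> Hom (wide_span_ob a) (wide_span_ob b) :=
  match a, b return wide_span_rel a b -> Hom (wide_span_ob a) (wide_span_ob b) with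
  | None, None => fun _ => idm X
  | None, Some j => fun _ => e j
  | Some i, None => fun u => False_rect _ u
  | Some i, Some j => fun u => eq_rect i (fun k => Hom (Q i) (Q k)) (idm (Q i)) j u
  end.

Lemma eq_rect_idm (i : I) (u : i = i) :
  eq_rect i (fun k => Hom (Q i) (Q k)) (idm (Q i)) i u = idm (Q i).
Proof. rewrite (proof_irrelevance _ u eq_refl). reflexivity. Qed.

Lemma wide_span_hom_id (a : option I) :
  wide_span_hom a a (wide_span_rel_refl a) = idm (wide_span_ob a).
Proof. destruct a; simpl; [apply eq_rect_idm | reflexivity]. Qed.

Lemma wide_span_hom_comp (a b c : option I) (u : wide_span_rel a b)
  (v : wide_span_rel b c) :
  wide_span_hom a c (wide_span_rel_trans _ _ _ v u) =
  wide_span_hom b c v \o wide_span_hom a b u.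
Proof.
  destruct a as [i|], b as [j|], c as [k|]; simpl in *; try contradiction.
  - subst. rewrite !eq_rect_idm. symmetry; apply comp_id_l.
  - subst. rewrite eq_rect_idm. symmetry; apply comp_id_l.
  - symmetry; apply comp_id_r.
  - symmetry; apply comp_id_l.
Qed.

Definition wide_span_diagram : Diagram wide_span_cat C :=
  @Build_Diagram wide_span_cat C wide_span_ob (fun a b => wide_span_hom a b)
    wide_span_hom_id wide_span_hom_comp.

End WideSpan.

Lemma wide_pushout_exists {C : Category} (H1 : has_small_colimits C)
  {X : C} {I : SmallType} {Q : I -> Ob C} (e : forall i, Hom X (Q i)) :
  exists (Z : C) (z : Hom X Z) (q : forall i, Hom (Q i) Z), is_wide_pushout e z q.
Proof.
  destruct (H1 _ (wide_span_diagram Q e)) as [Z [c [Hcocone Huniv]]].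
  exists Z, (c None), (fun i => c (Some i)). split.
  - intros i. exact (Hcocone None (Some i) Logic.I).
  - intros Y y r Hr.
    set (d := fun a : option I =>
                match a return Hom (wide_span_ob Q a) Y with
                | None => y
                | Some i => r i
                end).
    assert (Hd : is_cocone (wide_span_diagram Q e) d).
    { intros [i|] [j|] u; simpl in *; try contradiction.
      - subst. rewrite eq_rect_idm. apply comp_id_r.
      - apply Hr.
      - apply comp_id_r. }
    destruct (Huniv Y d Hd) as [h [Eh Hh]].
    exists h. split.
    + split; [exact (Eh None) | intros i; exact (Eh (Some i))].
    + intros h' [Ez Eq]. apply Hh. intros [i|]; simpl; auto.
Qed.

(* A parallel pair is not a thin category, so the coequalizer of f, g : A -> B
   is taken as the colimit of the thin diagram with arrows A -f-> B_f,
   A -g-> B_g, B -id-> B_f and B -id-> B_g (all B's copies of B): its cocones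
   are exactly the maps y with y f = y g. *)
Inductive pair_shape : Set := ps_src | ps_mid | ps_tgt_f | ps_tgt_g.

Definition pair_shape_relb (a b : pair_shape) : bool :=
  match a, b with
  | ps_src, ps_src | ps_mid, ps_mid | ps_tgt_f, ps_tgt_f | ps_tgt_g, ps_tgt_g
  | ps_src, ps_tgt_f | ps_src, ps_tgt_g | ps_mid, ps_tgt_f | ps_mid, ps_tgt_g => true
  | _, _ => false
  end.

Definition pair_shape_rel (a b : pair_shape) : Prop := pair_shape_relb a b = true.

Lemma pair_shape_rel_refl (a : pair_shape) : pair_shape_rel a a.
Proof. destruct a; reflexivity. Qed.

Lemma pair_shape_rel_trans (a b c : pair_shape) :
  pair_shape_rel b c -> pair_shape_rel a b -> pair_shape_rel a c.
Proof. unfold pair_shape_rel; destruct a, b, c; simpl; congruence. Qed.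

Definition pair_shape_cat : IndexCat :=
  thin_index_cat pair_shape_rel pair_shape_rel_refl pair_shape_rel_trans.

Section ParallelPair.
Context {C : Category} {A B : C} (f g : Hom A B).

Definition pair_ob (a : pair_shape) : C :=
  match a with ps_src => A | _ => B end.

Definition pair_hom (a b : pair_shape) :
  pair_shape_rel a b -> Hom (pair_ob a) (pair_ob b) :=
  match a, b return pair_shape_rel a b -> Hom (pair_ob a) (pair_ob b) with
  | ps_src, ps_src => fun _ => idm A
  | ps_src, ps_tgt_f => fun _ => f
  | ps_src, ps_tgt_g => fun _ => g
  | ps_mid, ps_mid | ps_tgt_f, ps_tgt_f | ps_tgt_g, ps_tgt_g
  | ps_mid, ps_tgt_f | ps_mid, ps_tgt_g => fun _ => idm B
  | _, _ => fun u => False_rect _ (Bool.diff_false_true u)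
  end.

Lemma pair_hom_id (a : pair_shape) :
  pair_hom a a (pair_shape_rel_refl a) = idm (pair_ob a).
Proof. destruct a; reflexivity. Qed.

Lemma pair_hom_comp (a b c : pair_shape) (u : pair_shape_rel a b)
  (v : pair_shape_rel b c) :
  pair_hom a c (pair_shape_rel_trans _ _ _ v u) = pair_hom b c v \o pair_hom a b u.
Proof.
  unfold pair_shape_rel in *.
  destruct a, b, c; simpl in *; try discriminate;
    symmetry; first [apply comp_id_l | apply comp_id_r].
Qed.

Definition pair_diagram : Diagram pair_shape_cat C :=
  @Build_Diagram pair_shape_cat C pair_ob (fun a b => pair_hom a b)
    pair_hom_id pair_hom_comp.

End ParallelPair.

Lemma coequalizer_exists {C : Category} (H1 : has_small_colimits C)
  {A B : C} (f g : Hom A B) : exists (Q : C) (q : Hom B Q), is_coequalizer f g q.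
Proof.
  destruct (H1 _ (pair_diagram f g)) as [Q [c [Hcocone Huniv]]].
  assert (Ef : c ps_tgt_f \o f = c ps_src) by exact (Hcocone ps_src ps_tgt_f eq_refl).
  assert (Eg : c ps_tgt_g \o g = c ps_src) by exact (Hcocone ps_src ps_tgt_g eq_refl).
  assert (Emf : c ps_tgt_f \o idm B = c ps_mid)
    by exact (Hcocone ps_mid ps_tgt_f eq_refl).
  assert (Emg : c ps_tgt_g \o idm B = c ps_mid)
    by exact (Hcocone ps_mid ps_tgt_g eq_refl).
  rewrite comp_id_r in Emf, Emg.
  assert (Efg : c ps_tgt_g = c ps_tgt_f) by congruence.
  exists Q, (c ps_tgt_f). split.
  - transitivity (c ps_src); [exact Ef |]. rewrite <- Eg, Efg. reflexivity.
  - intros Y y Hy.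
    set (d := fun a : pair_shape =>
                match a return Hom (pair_ob a) Y with ps_src => y \o f | _ => y end).
    assert (Hd : is_cocone (pair_diagram f g) d).
    { unfold pair_shape_rel; intros [] [] u; simpl in *; try discriminate;
        try apply comp_id_r; auto. }
    destruct (Huniv Y d Hd) as [h [Eh Hh]].
    exists h. split; [exact (Eh ps_tgt_f) |].
    intros h' E. apply Hh. intros []; simpl.
    + rewrite <- Ef. etransitivity; [apply comp_assoc |]. exact (f_equal (fun k => k \o f) E).
    + rewrite <- Emf. exact E.
    + exact E.
    + rewrite Efg. exact E.
Qed.

Section StrongEpi.
Context {C : Category}.

Definition is_strong_epi {X Y : C} (e : Hom X Y) : Prop :=
  is_epi e /\
  forall (D E : C) (m : Hom D E) (a : Hom X D) (b : Hom Y E),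
    is_mono m -> m \o a = b \o e -> exists d : Hom Y D, d \o e = a /\ m \o d = b.

Lemma strong_epi_extremal {X Y : C} {e : Hom X Y} :
  is_strong_epi e -> is_extremal_epi e.
Proof.
  intros [He Hlift]. split; [exact He |]. intros D f i Hi E.
  destruct (Hlift D Y i f (idm Y) Hi) as [d [Ed Eid]].
  { rewrite comp_id_l. symmetry; exact E. }
  exists d. split; [| exact Eid].
  apply Hi. rewrite comp_assoc, Eid, comp_id_l, comp_id_r. reflexivity.
Qed.

Lemma strong_epi_comp {X Y Z : C} {e1 : Hom X Y} {e2 : Hom Y Z} :
  is_strong_epi e1 -> is_strong_epi e2 -> is_strong_epi (e2 \o e1).
Proof.
  intros [He1 Hlift1] [He2 Hlift2]. split.
  - intros W g h E. apply He2, He1. rewrite <- !comp_assoc. exact E.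
  - intros D E m a b Hm Eab.
    destruct (Hlift1 D E m a (b \o e2) Hm) as [d1 [Ed1 Emd1]].
    { rewrite Eab. apply comp_assoc. }
    destruct (Hlift2 D E m d1 b Hm Emd1) as [d2 [Ed2 Emd2]].
    exists d2. split; [| exact Emd2]. rewrite comp_assoc, Ed2. exact Ed1.
Qed.

Lemma iso_strong_epi {X Y : C} {f : Hom X Y} {g : Hom Y X} :
  g \o f = idm X -> f \o g = idm Y -> is_strong_epi f.
Proof.
  intros Egf Efg. split.
  - intros W u v E.
    rewrite <- (comp_id_r u), <- (comp_id_r v), <- Efg, !comp_assoc, E.
    reflexivity.
  - intros D E m a b Hm Eab. exists (a \o g). split.
    + rewrite <- comp_assoc, Egf. apply comp_id_r.
    + rewrite comp_assoc, Eab, <- comp_assoc, Efg. apply comp_id_r.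
Qed.

Lemma coequalizer_epi {A B Q : C} {f g : Hom A B} {q : Hom B Q} :
  is_coequalizer f g q -> is_epi q.
Proof.
  intros [Eq Huniv] W u v E.
  destruct (Huniv W (u \o q)) as [h [_ Hh]].
  { rewrite <- !comp_assoc, Eq. reflexivity. }
  rewrite (Hh u eq_refl). symmetry. apply Hh. symmetry. exact E.
Qed.

Lemma coequalizer_strong_epi {A B Q : C} {f g : Hom A B} {q : Hom B Q} :
  is_coequalizer f g q -> is_strong_epi q.
Proof.
  intros Hq. pose proof (coequalizer_epi Hq) as He. destruct Hq as [Eq Huniv].
  split; [exact He |]. intros D E m a b Hm Eab.
  destruct (Huniv D a) as [d [Ed _]].
  { apply Hm. rewrite !comp_assoc, Eab, <- !comp_assoc, Eq. reflexivity. }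
  exists d. split; [exact Ed |].
  apply He. rewrite <- comp_assoc, Ed. exact Eab.
Qed.

Lemma coequalizer_split_mono_eq {A B Q : C} {f g : Hom A B} {q : Hom B Q}
  (r : Hom Q B) : is_coequalizer f g q -> r \o q = idm B -> f = g.
Proof.
  intros [Eq _] Erq.
  rewrite <- (comp_id_l f), <- (comp_id_l g), <- Erq, <- !comp_assoc, Eq.
  reflexivity.
Qed.

Lemma wide_pushout_epi {X : C} {I : SmallType} {Q : I -> Ob C}
  {e : forall i, Hom X (Q i)} {Z : C} {z : Hom X Z} {q : forall i, Hom (Q i) Z} :
  (forall i, is_epi (e i)) -> is_wide_pushout e z q -> is_epi z.
Proof.
  intros He [Eq Huniv] W u v E.
  destruct (Huniv W (u \o z) (fun i => u \o q i)) as [h [_ Hh]].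
  { intros i. rewrite <- comp_assoc, Eq. reflexivity. }
  rewrite (Hh u) by (split; auto).
  symmetry. apply Hh. split.
  - symmetry; exact E.
  - intros i. apply He. rewrite <- !comp_assoc, Eq. symmetry; exact E.
Qed.

Lemma wide_pushout_strong_epi {X : C} {I : SmallType} {Q : I -> Ob C}
  {e : forall i, Hom X (Q i)} {Z : C} {z : Hom X Z} {q : forall i, Hom (Q i) Z} :
  (forall i, is_strong_epi (e i)) -> is_wide_pushout e z q -> is_strong_epi z.
Proof.
  intros He Hwp.
  assert (Hz : is_epi z) by (apply (wide_pushout_epi (fun i => proj1 (He i)) Hwp)).
  split; [exact Hz |]. destruct Hwp as [Eq Huniv].
  intros D E m a b Hm Eab.
  destruct (dependent_functional_choice _ _
              (fun i d => d \o e i = a /\ m \o d = b \o q i)) as [d Ed].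
  { intros i. apply (proj2 (He i)); [exact Hm |].
    rewrite Eab, <- comp_assoc, Eq. reflexivity. }
  destruct (Huniv D a d) as [h [[Ehz Ehq] _]]; [apply Ed |].
  exists h. split; [exact Ehz |].
  apply Hz. rewrite <- comp_assoc, Ehz. exact Eab.
Qed.

End StrongEpi.

Lemma tensh_comp_l {C : MonoidalCategory} {X Y Z M : C} (f : Hom X Y) (g : Hom Y Z) :
  (g \o f) <*> idm M = (g <*> idm M) \o (f <*> idm M).
Proof. rewrite <- tens_comp, comp_id_l. reflexivity. Qed.

Section AbsoluteValue.
Context {C : MonoidalCategory}.
Hypothesis H1 : has_small_colimits C.
Hypothesis H4 : cowellpowered C.
Hypothesis H5e : tens_preserves_epi C.
Hypothesis H6 : tens_preserves_extremal_quotient_colimits C.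
Hypothesis H9 : tens_preserves_coequalizers C.
Context {A B P : C} (psi : Hom (P <x> A) B).

Definition psi_factors_through {Q : C} (e : Hom P Q) : Prop :=
  exists phi : Hom (Q <x> A) B, phi \o (e <*> idm A) = psi.

Definition tensor_monos_factor_through {Q : C} (e : Hom P Q) : Prop :=
  forall (P1 : C) (psi1 : Hom (P1 <x> A) B) (sigma : Hom P P1),
    tensor_mono psi1 -> psi1 \o (sigma <*> idm A) = psi ->
    exists r : Hom Q P1, r \o e = sigma.

Definition admissible {Q : C} (e : Hom P Q) : Prop :=
  is_strong_epi e /\ psi_factors_through e /\ tensor_monos_factor_through e.

Definition largest_admissible {Z : C} (z : Hom P Z) : Prop :=
  admissible z /\
  forall (Q : C) (e : Hom P Q), admissible e -> exists r : Hom Q Z, r \o e = z.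

Lemma admissible_iso_comp {Q Q' : C} {e : Hom P Q} {u : Hom Q Q'} {v : Hom Q' Q} :
  v \o u = idm Q -> u \o v = idm Q' -> admissible e -> admissible (u \o e).
Proof.
  intros Evu Euv [He [[phi Ephi] Hmonos]]. split; [| split].
  - exact (strong_epi_comp He (iso_strong_epi Evu Euv)).
  - exists (phi \o (v <*> idm A)).
    rewrite <- comp_assoc, <- tensh_comp_l, comp_assoc, Evu, comp_id_l.
    exact Ephi.
  - intros P1 psi1 sigma Hmono Esigma.
    destruct (Hmonos P1 psi1 sigma Hmono Esigma) as [r Er].
    exists (r \o v).
    rewrite <- comp_assoc, (comp_assoc e u v), Evu, comp_id_l. exact Er.
Qed.

Lemma admissible_wide_pushout {I : SmallType} {Q : I -> Ob C}
  {e : forall i, Hom P (Q i)} {Z : C} {z : Hom P Z} {q : forall i, Hom (Q i) Z} :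
  (forall i, admissible (e i)) -> is_wide_pushout e z q -> admissible z.
Proof.
  intros He Hwp. split; [| split].
  - exact (wide_pushout_strong_epi (fun i => proj1 (He i)) Hwp).
  - destruct (dependent_functional_choice _ _
                (fun i phi => phi \o (e i <*> idm A) = psi)) as [phi Ephi].
    { intros i. apply He. }
    assert (Hext : forall i, is_extremal_epi (e i))
      by (intros i; apply strong_epi_extremal, He).
    destruct (H6 A _ _ _ _ Hext _ _ _ Hwp) as [_ Huniv].
    destruct (Huniv B psi phi Ephi) as [h [[Eh _] _]].
    exists h. exact Eh.
  - intros P1 psi1 sigma Hmono Esigma.
    destruct (dependent_functional_choice _ _ (fun i r => r \o e i = sigma))
      as [r Er].
    { intros i. exact (proj2 (proj2 (He i)) P1 psi1 sigma Hmono Esigma). }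
    destruct (proj2 Hwp P1 sigma r Er) as [k [[Ek _] _]].
    exists k. exact Ek.
Qed.

Lemma largest_admissible_exists : exists (Z : C) (z : Hom P Z), largest_admissible z.
Proof.
  destruct (H4 P) as [I [Q [e [_ Hrep]]]].
  destruct (wide_pushout_exists H1 (fun j : {i : I | admissible (e i)} => e (proj1_sig j)))
    as [Z [z [q Hwp]]].
  exists Z, z. split.
  - exact (admissible_wide_pushout (fun j => proj2_sig j) Hwp).
  - intros Q' e' He'.
    destruct (Hrep Q' e' (proj1 (proj1 He')))
      as [i [phi [[phi_inv [Ephi1 Ephi2]] Ephi]]].
    assert (Ei : e i = phi_inv \o e').
    { rewrite <- Ephi, comp_assoc, Ephi1, comp_id_l. reflexivity. }
    assert (Hi : admissible (e i)).
    { rewrite Ei. exact (admissible_iso_comp Ephi2 Ephi1 He'). }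
    exists (q (exist _ i Hi) \o phi_inv).
    rewrite <- comp_assoc; simpl. rewrite <- Ei. exact (proj1 Hwp (exist _ i Hi)).
Qed.

Lemma admissible_tensor_mono_factor {Z P1 : C} {z : Hom P Z} {h : Hom (Z <x> A) B}
  {psi1 : Hom (P1 <x> A) B} {sigma : Hom P P1} :
  admissible z -> h \o (z <*> idm A) = psi ->
  tensor_mono psi1 -> psi1 \o (sigma <*> idm A) = psi ->
  exists kappa : Hom Z P1, kappa \o z = sigma /\ psi1 \o (kappa <*> idm A) = h.
Proof.
  intros [[Hz _] [_ Hmonos]] Eh Hmono Esigma.
  destruct (Hmonos P1 psi1 sigma Hmono Esigma) as [kappa Ekappa].
  exists kappa. split; [exact Ekappa |].
  apply (proj1 (H5e _ _ A _ Hz)).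
  rewrite <- comp_assoc, <- tensh_comp_l, Ekappa, Esigma. symmetry. exact Eh.
Qed.

Lemma admissible_coequalizer_comp {Z R Q : C} {z : Hom P Z} {h : Hom (Z <x> A) B}
  {f g : Hom R Z} {c : Hom Z Q} :
  admissible z -> h \o (z <*> idm A) = psi ->
  h \o (f <*> idm A) = h \o (g <*> idm A) -> is_coequalizer f g c ->
  admissible (c \o z).
Proof.
  intros Hz Eh Efg Hc. split; [| split].
  - exact (strong_epi_comp (proj1 Hz) (coequalizer_strong_epi Hc)).
  - destruct (proj2 (H9 A _ _ _ _ _ _ Hc) B h Efg) as [h' [Eh' _]].
    exists h'. rewrite tensh_comp_l, comp_assoc, Eh'. exact Eh.
  - intros P1 psi1 sigma Hmono Esigma.
    destruct (admissible_tensor_mono_factor Hz Eh Hmono Esigma)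
      as [kappa [Ekappa Eh1]].
    destruct (proj2 Hc P1 kappa) as [k [Ek _]].
    { apply Hmono. rewrite !tensh_comp_l, !comp_assoc, Eh1. exact Efg. }
    exists k. rewrite comp_assoc, Ek. exact Ekappa.
Qed.

Lemma largest_admissible_tensor_mono {Z : C} {z : Hom P Z} {h : Hom (Z <x> A) B} :
  largest_admissible z -> h \o (z <*> idm A) = psi -> tensor_mono h.
Proof.
  intros [Hz Hlargest] Eh R f g Efg.
  destruct (coequalizer_exists H1 f g) as [Q [c Hc]].
  destruct (Hlargest Q (c \o z) (admissible_coequalizer_comp Hz Eh Efg Hc))
    as [r Er].
  apply (coequalizer_split_mono_eq r Hc).
  apply (proj1 (proj1 Hz)). rewrite <- comp_assoc, comp_id_l. exact Er.
Qed.

Lemma largest_admissible_absolute_value {Z : C} {z : Hom P Z}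
  {h : Hom (Z <x> A) B} :
  largest_admissible z -> h \o (z <*> idm A) = psi -> is_absolute_value psi h z.
Proof.
  intros Hz Eh. split; [exact (largest_admissible_tensor_mono Hz Eh) |].
  split; [exact Eh |].
  intros P1 psi1 Hmono [sigma Esigma].
  destruct (admissible_tensor_mono_factor (proj1 Hz) Eh Hmono Esigma)
    as [kappa [_ Ekappa]].
  exists kappa. exact Ekappa.
Qed.

End AbsoluteValue.

Theorem theorem5p15 (C : MonoidalCategory)
  (H1 : has_small_colimits C)
  (H4 : cowellpowered C)
  (H5 : tens_preserves_mono C)
  (H5e : tens_preserves_epi C)
  (H5a : tens_square_extremal_epi C)
  (H6 : tens_preserves_extremal_quotient_colimits C)
  (H9 : tens_preserves_coequalizers C) :
  forall (A B P : C) (psi : Hom (P <x> A) B), has_absolute_value psi.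
Proof.
  intros A B P psi.
  destruct (largest_admissible_exists H1 H4 H6 psi) as [Z [z Hz]].
  destruct (proj1 (proj2 (proj1 Hz))) as [h Eh].
  exists Z, h, z.
  exact (largest_admissible_absolute_value H1 H5e H9 psi Hz Eh).
Qed.
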